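(* Let $M>0$, $\beta^*>0$, and let $g$ be the log-normal density $g(t)=\frac{1}{t\sigma\sqrt{2\pi}}\exp\!\big(-\frac{(\ln t-\mu)^2}{2\sigma^2}\big)$ for $t>0$, $g(t)=0$ for $t\le0$ ($\mu\in\mathbb{R}$, $\sigma>0$). Let $I$ be the unique $C^1$ solution on $[0,\infty)$ of \[ I'(t)=\beta^*(M-I(t))\Big(I(t)-\int_0^t g(t-s)I(s)\,ds\Big),\qquad I(0)=I_0\in[0,M]. \] Then: (1) if $I_0>0$ then $I(t)>0$ for all $t$, and if $I_0=0$ then $I\equiv0$; (2) if $I_0<M$ then $I(t)<M$ for all $t$, and if $I_0=M$ then $I\equiv M$. *)

From Stdlib Require Import Reals.
From Coquelicot Require Import Coquelicot.
Open Scope R_scope.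

Definition lognormal (mu sigma : R) (t : R) : R :=
  if Rle_dec t 0 then 0
  else / (t * sigma * sqrt (2 * PI)) * exp (- (ln t - mu) ^ 2 / (2 * sigma ^ 2)).

Definition rhs (beta M : R) (g I : R -> R) (t : R) : R :=
  beta * (M - I t) * (I t - RInt (fun s => g (t - s) * I s) 0 t).

Definition is_C1_solution (beta M : R) (g I : R -> R) : Prop :=
  (forall t, 0 < t -> is_derive I t (rhs beta M g I t)) /\
  filterlim (fun h => (I h - I 0) / h) (at_right 0) (locally (rhs beta M g I 0)) /\
  (forall t, 0 < t -> continuous (rhs beta M g I) t) /\
  filterlim (rhs beta M g I) (at_right 0) (locally (rhs beta M g I 0)).

From Stdlib Require Import Reals Lra Classical.
From Coquelicot Require Import Coquelicot.
Open Scope R_scope.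

(* On a bounded time interval |I'| is at most a constant times |M - I|, and also at most a
   constant times the supremum of |I| over the past. A Gronwall-type argument for such Volterra
   equations therefore shows that I = M identically once I takes the value M at some time, and
   that I = 0 identically if I(0) = 0; with the intermediate value theorem this gives (2) and
   the second half of (1).
   If 0 < I(0) < M, a continuity argument shows that I - g * I stays positive: as long as it
   does, I' > 0, so I is nondecreasing and (g * I)(t) <= I(t) int_0^t g < I(t). Besides
   continuity and positivity, the only property of the log-normal density used is
   int_0^t g < 1 for finite t. The substitution t = exp(mu + sigma sqrt 2 y) reduces it to
   int e^(-y^2) dy <= sqrt pi, which follows from Feynman's identity
   (int_0^x e^(-y^2) dy)^2 + int_0^1 e^(-x^2 (1 + u^2)) / (1 + u^2) du = pi / 4. *)

(* Coquelicot lemmas specialized to [R], where [apply] cannot infer the normed-module structure. *)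
Lemma ex_derive_continuous_R (f : R -> R) x : ex_derive f x -> continuous f x.
Proof. exact (ex_derive_continuous f x). Qed.

Lemma ex_RInt_continuous_R (f : R -> R) a b :
  (forall z, Rmin a b <= z <= Rmax a b -> continuous f z) -> ex_RInt f a b.
Proof. exact (ex_RInt_continuous f a b). Qed.

Lemma locally_R_intro (x d : R) (P : R -> Prop) :
  0 < d -> (forall y, Rabs (y - x) < d -> P y) -> locally x P.
Proof. intros hd H. exists (mkposreal d hd). intros y hy. apply H, hy. Qed.

Lemma at_right_locally_R (f : R -> R) (x l eps : R) :
  filterlim f (at_right x) (locally l) -> 0 < eps ->
  exists d, 0 < d /\ forall y, x < y < x + d -> Rabs (f y - l) < eps.
Proof.
  intros Hf heps. destruct (Hf _ (locally_ball l (mkposreal eps heps))) as [d Hd].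
  exists d. split; [apply cond_pos|]. intros y hy. apply (Hd y); [|lra].
  change (Rabs (y - x) < d). rewrite Rabs_pos_eq; lra.
Qed.

Lemma RInt_reflect (f : R -> R) (t : R) :
  ex_RInt f 0 t -> RInt (fun s => f (t - s)) 0 t = RInt f 0 t :> R.
Proof.
  intros Hf.
  assert (Hf' : ex_RInt f (-1 * 0 + t) (-1 * t + t)).
  { replace (-1 * 0 + t) with t by ring. replace (-1 * t + t) with 0 by ring.
    apply ex_RInt_swap, Hf. }
  assert (Hlin : RInt (fun s => -1 * f (-1 * s + t)) 0 t = RInt f (-1 * 0 + t) (-1 * t + t))
    by exact (RInt_comp_lin f (-1) t 0 t Hf').
  assert (Hscal : RInt (fun s => -1 * (-1 * f (-1 * s + t))) 0 t
                  = -1 * RInt (fun s => -1 * f (-1 * s + t)) 0 t)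
    by exact (RInt_scal _ 0 t (-1) (ex_RInt_comp_lin f (-1) t 0 t Hf')).
  assert (Hswap : RInt f t 0 = - RInt f 0 t)
    by exact (eq_sym (opp_RInt_swap f 0 t Hf)).
  assert (Hext : forall s, f (t - s) = -1 * (-1 * f (-1 * s + t)))
    by (intros s; replace (-1 * s + t) with (t - s) by ring; ring).
  rewrite (RInt_ext _ _ 0 t (fun s _ => Hext s)).
  rewrite Hscal, Hlin.
  replace (-1 * 0 + t) with t by ring. replace (-1 * t + t) with 0 by ring.
  rewrite Hswap. ring.
Qed.

(** * Continuation and Gronwall-type uniqueness *)

Lemma continuity_pt_bounded (f : R -> R) (a b : R) : a <= b ->
  (forall x, a <= x <= b -> continuity_pt f x) ->
  exists B, 0 <= B /\ forall x, a <= x <= b -> Rabs (f x) <= B.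
Proof.
  intros hab Hf.
  destruct (continuity_ab_maj (fun x => Rabs (f x)) a b hab) as [x [Hx _]].
  - intros c hc. apply (continuity_pt_comp f Rabs); [apply Hf, hc | apply Rcontinuity_abs].
  - exists (Rabs (f x)). split; [apply Rabs_pos | exact Hx].
Qed.

Lemma le_of_derive_ge0 (f df : R -> R) (a b : R) : a <= b ->
  (forall x, a <= x <= b -> continuity_pt f x) ->
  (forall c, a < c < b -> is_derive f c (df c)) ->
  (forall c, a < c < b -> 0 <= df c) ->
  f a <= f b.
Proof.
  intros hab Hf Hd Hpos.
  destruct (MVT_gen f a b (fun c => Rmax 0 (df c))) as [c [_ Hc]].
  - intros x hx. rewrite Rmin_left, Rmax_right in hx by lra.
    rewrite Rmax_right by (apply Hpos; lra). apply Hd, hx.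
  - intros x hx. rewrite Rmin_left, Rmax_right in hx by lra. apply Hf, hx.
  - pose proof (Rmult_le_pos _ (b - a) (Rmax_l 0 (df c))). lra.
Qed.

Lemma continuation_principle (P : R -> Prop) (a b : R) : a <= b -> P a ->
  (forall t, a < t <= b -> (forall s, a <= s < t -> P s) -> P t) ->
  (forall t, a <= t < b -> (forall s, a <= s <= t -> P s) ->
     exists d, 0 < d /\ forall s, t < s < t + d -> P s) ->
  forall t, a <= t <= b -> P t.
Proof.
  intros hab Ha Hleft Hright.
  set (E := fun x => a <= x <= b /\ forall s, a <= s <= x -> P s).
  assert (HEa : E a) by (split; [lra | intros s hs; replace s with a by lra; exact Ha]).
  destruct (completeness E) as [c [Hub Hlub]].
  { exists b. intros x [hx _]. lra. }
  { exists a. exact HEa. }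
  assert (hac : a <= c) by (apply Hub, HEa).
  assert (hcb : c <= b) by (apply Hlub; intros x [hx _]; lra).
  assert (Hbelow : forall s, a <= s < c -> P s).
  { intros s hs. apply NNPP. intros HPs.
    enough (c <= s) by lra.
    apply Hlub. intros x [hx Hx]. apply Rnot_lt_le. intros hsx. apply HPs, Hx. lra. }
  assert (HEc : E c).
  { split; [lra|]. intros s hs.
    destruct (Rle_lt_or_eq_dec s c (proj2 hs)) as [hlt | ->]; [apply Hbelow; lra|].
    destruct (Rle_lt_or_eq_dec a c hac) as [hlt | <-]; [|exact Ha].
    apply Hleft; [lra | exact Hbelow]. }
  assert (hcb' : c = b).
  { destruct (Rle_lt_or_eq_dec c b hcb) as [hlt | heq]; [exfalso | exact heq].
    destruct (Hright c (conj hac hlt) (proj2 HEc)) as [d [hd Hd]].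
    set (c' := Rmin (c + d / 2) b).
    assert (hc' : c < c' <= b) by (unfold c', Rmin; destruct (Rle_dec (c + d / 2) b); lra).
    enough (HEc' : E c') by (pose proof (Hub c' HEc'); lra).
    split; [lra|]. intros s hs.
    destruct (Rle_lt_dec s c) as [hsc | hcs]; [apply (proj2 HEc); lra|].
    apply Hd. split; [lra|].
    apply Rle_lt_trans with c'; [lra | unfold c'; pose proof (Rmin_l (c + d / 2) b); lra]. }
  intros t ht. apply (proj2 HEc). lra.
Qed.

Lemma eq0_of_continuity_pt_left (f : R -> R) (a t : R) : a < t -> continuity_pt f t ->
  (forall s, a <= s < t -> f s = 0) -> f t = 0.
Proof.
  intros hat Hf Hbelow. destruct (Req_dec (f t) 0) as [h | h]; [exact h | exfalso].
  destruct (proj1 (continuity_pt_locally f t) Hf (mkposreal _ (Rabs_pos_lt _ h))) as [d Hnear].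
  pose proof (cond_pos d).
  set (s := Rmax a (t - d / 2)).
  assert (hs : a <= s < t) by (unfold s, Rmax; destruct (Rle_dec a (t - d / 2)); lra).
  assert (Hs : Rabs (f s - f t) < Rabs (f t)).
  { apply Hnear. change (Rabs (s - t) < d). rewrite Rabs_left by lra.
    unfold s, Rmax; destruct (Rle_dec a (t - d / 2)); lra. }
  rewrite (Hbelow s hs), Rminus_0_l, Rabs_Ropp in Hs. lra.
Qed.

Section VolterraGronwall.

Variables (f df : R -> R) (a b K : R).
Hypothesis K_ge0 : 0 <= K.
Hypothesis f_cont : forall x, a <= x <= b -> continuity_pt f x.
Hypothesis f_derive : forall c, a < c < b -> is_derive f c (df c).
Hypothesis abs_df_le : forall c m, a <= c < b ->
  (forall u, a <= u <= c -> Rabs (f u) <= m) -> Rabs (df c) <= K * m.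

(* Over a step of length at most 1 / (2K + 2) the maximum of |f| is at most half of itself. *)
Lemma eq0_right_of_abs_derive_le_sup t : a <= t < b -> (forall s, a <= s <= t -> f s = 0) ->
  forall s, t < s < t + Rmin (b - t) (/ (2 * K + 2)) -> f s = 0.
Proof.
  intros ht Hzero s hs.
  assert (hK2 : 0 < 2 * K + 2) by lra.
  pose proof (Rmin_l (b - t) (/ (2 * K + 2))). pose proof (Rmin_r (b - t) (/ (2 * K + 2))).
  set (d := Rmin (b - t) (/ (2 * K + 2))) in *.
  destruct (continuity_ab_maj (fun x => Rabs (f x)) t s) as [x [Hx hx]]; [lra| |].
  { intros c hc. apply (continuity_pt_comp f Rabs); [apply f_cont; lra | apply Rcontinuity_abs]. }
  set (m := Rabs (f x)) in *.
  assert (Hm : forall u, a <= u <= x -> Rabs (f u) <= m).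
  { intros u hu. destruct (Rle_dec u t) as [hut | hut].
    - rewrite (Hzero u), Rabs_R0 by lra. apply Rabs_pos.
    - apply Hx. lra. }
  destruct (MVT_gen f t x df) as [c [hc Hc]].
  - intros y hy. rewrite Rmin_left, Rmax_right in hy by lra. apply f_derive. lra.
  - intros y hy. rewrite Rmin_left, Rmax_right in hy by lra. apply f_cont. lra.
  - rewrite Rmin_left, Rmax_right in hc by lra.
    rewrite (Hzero t), Rminus_0_r in Hc by lra.
    assert (Hdc : Rabs (df c) <= K * m) by (apply abs_df_le; [lra | intros u hu; apply Hm; lra]).
    assert (Hmx : m <= K * m * / (2 * K + 2)).
    { unfold m at 1. rewrite Hc, Rabs_mult, (Rabs_pos_eq (x - t)) by lra.
      apply Rmult_le_compat; [apply Rabs_pos | lra | exact Hdc | lra]. }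
    assert (Hhalf : K * m * / (2 * K + 2) <= m / 2).
    { apply Rmult_le_reg_r with (2 * K + 2); [exact hK2|].
      rewrite Rmult_assoc, Rinv_l by lra. pose proof (Rabs_pos (f x)). unfold m in *. nra. }
    pose proof (Rabs_pos (f x)). pose proof (Hx s ltac:(lra)).
    apply Rabs_eq_0. pose proof (Rabs_pos (f s)). unfold m in *. lra.
Qed.

Lemma eq0_of_abs_derive_le_sup : a <= b -> f a = 0 -> forall t, a <= t <= b -> f t = 0.
Proof.
  intros hab Ha.
  apply (continuation_principle (fun t => f t = 0) a b hab Ha).
  - intros t ht. apply eq0_of_continuity_pt_left; [lra | apply f_cont; lra].
  - intros t ht Hzero. exists (Rmin (b - t) (/ (2 * K + 2))). split.
    + apply Rmin_glb_lt; [lra | apply Rinv_0_lt_compat; lra].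
    + exact (eq0_right_of_abs_derive_le_sup t ht Hzero).
Qed.

End VolterraGronwall.

(** * The Gaussian integral *)

Definition gauss (x : R) : R := exp (- x ^ 2).

Lemma gauss_continuous x : continuous gauss x.
Proof. apply ex_derive_continuous_R. unfold gauss; auto_derive; auto. Qed.

Lemma ex_RInt_gauss a b : ex_RInt gauss a b.
Proof. apply ex_RInt_continuous_R. intros; apply gauss_continuous. Qed.

Lemma is_derive_RInt_gauss (x : R) : is_derive (RInt gauss 0) x (gauss x).
Proof.
  apply (is_derive_RInt gauss (RInt gauss 0) 0 x).
  - apply filter_forall. intros b. apply (RInt_correct (V:=R_CompleteNormedModule)), ex_RInt_gauss.
  - apply gauss_continuous.
Qed.

Definition gauss_param_integrand (x t : R) : R :=
  exp (- (x ^ 2 * (1 + t ^ 2))) / (1 + t ^ 2).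

Definition gauss_param (x : R) : R := RInt (gauss_param_integrand x) 0 1.

Lemma one_add_pow2_pos t : 0 < 1 + t ^ 2.
Proof. pose proof (pow2_ge_0 t). lra. Qed.

Lemma is_derive_gauss_param_integrand (x t : R) :
  is_derive (fun u => gauss_param_integrand u t) x (-2 * x * exp (- (x ^ 2 * (1 + t ^ 2)))).
Proof.
  pose proof (one_add_pow2_pos t).
  unfold gauss_param_integrand. auto_derive.
  - simpl in *; lra.
  - simpl. field. simpl in *; lra.
Qed.

Lemma continuous_gauss_param_integrand x t : continuous (gauss_param_integrand x) t.
Proof.
  pose proof (one_add_pow2_pos t).
  apply ex_derive_continuous_R. unfold gauss_param_integrand. auto_derive. simpl in *; lra.
Qed.

Lemma is_derive_gauss_param (x : R) :
  is_derive gauss_param x (-2 * gauss x * RInt gauss 0 x).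
Proof.
  assert (Hd : forall u t, Derive (fun z => gauss_param_integrand z t) u
                         = -2 * u * exp (- (u ^ 2 * (1 + t ^ 2)))).
  { intros u t. apply is_derive_unique, is_derive_gauss_param_integrand. }
  replace (-2 * gauss x * RInt gauss 0 x)
    with (RInt (fun t => Derive (fun u => gauss_param_integrand u t) x) 0 1).
  - apply is_derive_RInt_param.
    + apply filter_forall. intros y t _. eexists. apply is_derive_gauss_param_integrand.
    + intros t _. eapply continuity_2d_pt_ext.
      { intros u v. symmetry. apply Hd. }
      repeat first
        [ apply continuity_2d_pt_mult | apply continuity_2d_pt_plus
        | apply continuity_2d_pt_opp | apply continuity_2d_pt_id1
        | apply continuity_2d_pt_id2 | apply continuity_2d_pt_const
        | apply continuity_1d_2d_pt_comp; [apply derivable_continuous_pt, derivable_exp|] ].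
    + apply filter_forall. intros y. apply ex_RInt_continuous_R.
      intros; apply continuous_gauss_param_integrand.
  - assert (Hfactor : forall t, Derive (fun u => gauss_param_integrand u t) x
                             = (-2 * gauss x) * (x * gauss (x * t + 0))).
    { intros t. rewrite Hd. unfold gauss.
      replace (- (x ^ 2 * (1 + t ^ 2))) with (- x ^ 2 + - (x * t + 0) ^ 2) by ring.
      rewrite exp_plus. ring. }
    rewrite (RInt_ext _ _ 0 1 (fun t _ => Hfactor t)).
    rewrite (RInt_scal (V:=R_CompleteNormedModule)).
    + replace (RInt gauss 0 x) with (RInt gauss (x * 0 + 0) (x * 1 + 0)) by (f_equal; ring).
      rewrite <- (RInt_comp_lin gauss x 0 0 1) by apply ex_RInt_gauss.
      reflexivity.
    + apply ex_RInt_continuous_R. intros z _.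
      apply (continuous_comp (fun t => x * t + 0) (fun y => x * gauss y)).
      * apply ex_derive_continuous_R. auto_derive. auto.
      * apply ex_derive_continuous_R. unfold gauss. auto_derive. auto.
Qed.

Lemma gauss_param0 : gauss_param 0 = PI / 4.
Proof.
  unfold gauss_param.
  rewrite (RInt_ext _ (fun t => / (1 + t ^ 2))).
  2:{ intros t _. unfold gauss_param_integrand.
      replace (- (0 ^ 2 * (1 + t ^ 2))) with 0 by ring. rewrite exp_0. apply Rmult_1_l. }
  apply is_RInt_unique.
  replace (PI / 4) with (minus (atan 1) (atan 0)).
  - apply (is_RInt_derive atan).
    + intros x _. apply is_derive_Reals, derivable_pt_lim_atan.
    + intros x _. pose proof (one_add_pow2_pos x).
      apply ex_derive_continuous_R. auto_derive. simpl in *; lra.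
  - rewrite atan_1, atan_0. unfold minus, plus, opp; simpl. ring.
Qed.

Lemma gauss_param_ge0 x : 0 <= gauss_param x.
Proof.
  apply RInt_ge_0; [lra| |].
  - apply ex_RInt_continuous_R. intros; apply continuous_gauss_param_integrand.
  - intros t _. pose proof (one_add_pow2_pos t). pose proof (exp_pos (- (x ^ 2 * (1 + t ^ 2)))).
    unfold gauss_param_integrand. apply Rlt_le, Rdiv_lt_0_compat; lra.
Qed.

Lemma RInt_gauss_pow2_add_param (x : R) : RInt gauss 0 x ^ 2 + gauss_param x = PI / 4.
Proof.
  set (F := fun y => RInt gauss 0 y ^ 2 + gauss_param y).
  assert (HF : forall y, is_derive F y 0).
  { intros y. evar (d : R). replace 0 with d.
    - apply (is_derive_plus (fun y => RInt gauss 0 y ^ 2)).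
      + apply (is_derive_pow (RInt gauss 0)). apply is_derive_RInt_gauss.
      + apply is_derive_gauss_param.
    - unfold d, plus. simpl. ring. }
  destruct (MVT_gen F 0 x (fun _ => 0)) as [c [_ Hc]].
  - intros; apply HF.
  - intros y _. apply continuity_pt_filterlim, ex_derive_continuous_R. eexists; apply HF.
  - change (F x = PI / 4). unfold F at 2 in Hc.
    rewrite RInt_point, gauss_param0 in Hc. unfold zero in Hc; simpl in Hc. lra.
Qed.

Lemma Rabs_RInt_gauss_le (x : R) : Rabs (RInt gauss 0 x) <= sqrt PI / 2.
Proof.
  pose proof (RInt_gauss_pow2_add_param x). pose proof (gauss_param_ge0 x).
  rewrite <- (sqrt_pow2 (Rabs (RInt gauss 0 x))) by apply Rabs_pos. rewrite pow2_abs.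
  replace (sqrt PI / 2) with (sqrt (PI / 4)).
  - apply sqrt_le_1_alt. lra.
  - rewrite sqrt_div_alt by lra. replace 4 with (2 ^ 2) by ring.
    rewrite sqrt_pow2; lra.
Qed.

Lemma RInt_gauss_le (a b : R) : RInt gauss a b <= sqrt PI.
Proof.
  rewrite <- (RInt_Chasles gauss a 0 b) by apply ex_RInt_gauss.
  rewrite <- (opp_RInt_swap gauss 0 a) by apply ex_RInt_gauss.
  pose proof (Rabs_RInt_gauss_le a) as Ha. pose proof (Rabs_RInt_gauss_le b) as Hb.
  apply Rabs_le_between in Ha. apply Rabs_le_between in Hb.
  unfold plus, opp; simpl. lra.
Qed.

(** * The log-normal density *)

Lemma sqrt_2PI_pos : 0 < sqrt (2 * PI).
Proof. apply sqrt_lt_R0. pose proof PI_RGT_0. lra. Qed.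

Section Lognormal.

Variables mu sigma : R.
Hypothesis hsigma : 0 < sigma.

Lemma lognormal_nonpos t : t <= 0 -> lognormal mu sigma t = 0.
Proof. intros ht. unfold lognormal. destruct (Rle_dec t 0); lra. Qed.

Lemma lognormal_of_pos t : 0 < t ->
  lognormal mu sigma t = / (t * sigma * sqrt (2 * PI)) * exp (- (ln t - mu) ^ 2 / (2 * sigma ^ 2)).
Proof. intros ht. unfold lognormal. destruct (Rle_dec t 0); [lra | reflexivity]. Qed.

Lemma lognormal_gt0 t : 0 < t -> 0 < lognormal mu sigma t.
Proof.
  intros ht. rewrite lognormal_of_pos by exact ht. pose proof sqrt_2PI_pos.
  apply Rmult_lt_0_compat; [apply Rinv_0_lt_compat | apply exp_pos].
  apply Rmult_lt_0_compat; [apply Rmult_lt_0_compat|]; lra.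
Qed.

Lemma lognormal_ge0 t : 0 <= lognormal mu sigma t.
Proof.
  destruct (Rle_dec t 0) as [ht | ht].
  - rewrite lognormal_nonpos by exact ht. lra.
  - apply Rlt_le, lognormal_gt0. lra.
Qed.

(* For ln t < -(2 |mu| + 16 sigma^2) the Gaussian factor is at most t^2. *)
Lemma lognormal_le_linear : exists d, 0 < d /\
  forall t, 0 < t < d -> lognormal mu sigma t <= t / (sigma * sqrt (2 * PI)).
Proof.
  exists (exp (- (2 * Rabs mu + 16 * sigma ^ 2))). split; [apply exp_pos|].
  intros t [ht htd]. pose proof sqrt_2PI_pos.
  set (a := - ln t).
  assert (ha : 2 * Rabs mu + 16 * sigma ^ 2 < a).
  { enough (ln t < - (2 * Rabs mu + 16 * sigma ^ 2)) by (unfold a; lra).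
    rewrite <- (ln_exp (- (2 * Rabs mu + 16 * sigma ^ 2))). apply ln_increasing; lra. }
  assert (Hexp : - (ln t - mu) ^ 2 / (2 * sigma ^ 2) <= 2 * ln t).
  { assert (hs2 : 0 < sigma ^ 2) by (apply pow_lt; lra).
    assert (hmu : a / 2 <= a + mu) by (pose proof (Rabs_maj2 mu); lra).
    apply Rmult_le_reg_r with (2 * sigma ^ 2); [lra|].
    unfold Rdiv. rewrite Rmult_assoc, Rinv_l by lra.
    replace (ln t) with (- a) by (unfold a; ring).
    pose proof (Rabs_pos mu). nra. }
  rewrite lognormal_of_pos by exact ht.
  apply Rle_trans with (/ (t * sigma * sqrt (2 * PI)) * (t * t)).
  - apply Rmult_le_compat_l.
    + apply Rlt_le, Rinv_0_lt_compat. apply Rmult_lt_0_compat; [apply Rmult_lt_0_compat|]; lra.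
    + replace (t * t) with (exp (2 * ln t)).
      * destruct Hexp as [Hlt | Heq]; [left; apply exp_increasing, Hlt | rewrite Heq; lra].
      * rewrite <- (exp_ln t) at 2 3 by exact ht. rewrite <- exp_plus. f_equal. ring.
  - right. field. lra.
Qed.

Lemma lognormal_continuous (t : R) : continuous (lognormal mu sigma) t.
Proof.
  pose proof sqrt_2PI_pos.
  destruct (Rtotal_order t 0) as [hneg | [h0 | hpos]].
  - apply (continuous_ext_loc _ (fun _ => 0)); [|apply continuous_const].
    apply (locally_R_intro t (- t)); [lra|]. intros y hy.
    apply Rabs_lt_between in hy. symmetry. apply lognormal_nonpos. lra.
  - subst t. apply continuity_pt_filterlim, continuity_pt_locally. intros eps.
    destruct lognormal_le_linear as [d [hd Hd]].
    set (C := sigma * sqrt (2 * PI)). assert (hC : 0 < C) by (unfold C; nra).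
    apply (locally_R_intro 0 (Rmin d (eps * C))).
    { apply Rmin_glb_lt; [lra|]. apply Rmult_lt_0_compat; [apply cond_pos | lra]. }
    intros y hy. rewrite Rminus_0_r in hy. apply Rabs_lt_between in hy.
    pose proof (Rmin_l d (eps * C)). pose proof (Rmin_r d (eps * C)).
    rewrite (lognormal_nonpos 0), Rminus_0_r by lra.
    destruct (Rle_dec y 0) as [hy0 | hy0].
    + rewrite lognormal_nonpos, Rabs_R0 by lra. apply cond_pos.
    + rewrite Rabs_pos_eq by apply lognormal_ge0.
      apply Rle_lt_trans with (y / C); [apply Hd; lra|].
      apply Rmult_lt_reg_r with C; [lra|]. unfold Rdiv. rewrite Rmult_assoc, Rinv_l; lra.
  - apply (continuous_ext_loc _
      (fun y => / (y * sigma * sqrt (2 * PI)) * exp (- (ln y - mu) ^ 2 / (2 * sigma ^ 2)))).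
    + apply (locally_R_intro t t); [lra|]. intros y hy.
      apply Rabs_lt_between in hy. symmetry. apply lognormal_of_pos. lra.
    + apply ex_derive_continuous_R. auto_derive. repeat split; try lra.
      apply Rgt_not_eq, Rmult_lt_0_compat; [apply Rmult_lt_0_compat|]; lra.
Qed.

Lemma ex_RInt_lognormal a b : ex_RInt (lognormal mu sigma) a b.
Proof. apply ex_RInt_continuous_R. intros; apply lognormal_continuous. Qed.

Lemma lognormal_change_of_var y :
  let s := sigma * sqrt 2 in
  s * exp (mu + s * y) * lognormal mu sigma (exp (mu + s * y)) = / sqrt PI * gauss y.
Proof.
  intros s. rewrite lognormal_of_pos, ln_exp by apply exp_pos. unfold gauss, s.
  assert (h2 : 0 < sqrt 2) by (apply sqrt_lt_R0; lra).
  assert (hP : 0 < sqrt PI) by (apply sqrt_lt_R0, PI_RGT_0).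
  replace (- (mu + sigma * sqrt 2 * y - mu) ^ 2 / (2 * sigma ^ 2)) with (- y ^ 2).
  - rewrite sqrt_mult by (pose proof PI_RGT_0; lra).
    pose proof (exp_pos (mu + sigma * sqrt 2 * y)). field. repeat split; lra.
  - replace ((mu + sigma * sqrt 2 * y - mu) ^ 2) with (sigma ^ 2 * (sqrt 2 * sqrt 2) * y ^ 2)
      by ring.
    rewrite sqrt_sqrt by lra. field. lra.
Qed.

Lemma RInt_lognormal_le1 a b : 0 < a -> 0 < b -> RInt (lognormal mu sigma) a b <= 1.
Proof.
  intros ha hb.
  set (s := sigma * sqrt 2).
  assert (hs : 0 < s) by (apply Rmult_lt_0_compat; [|apply sqrt_lt_R0]; lra).
  assert (hP : 0 < sqrt PI) by (apply sqrt_lt_R0, PI_RGT_0).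
  set (phi := fun y => exp (mu + s * y)).
  assert (Hphi : forall x, 0 < x -> phi ((ln x - mu) / s) = x).
  { intros x hx. unfold phi. replace (mu + s * ((ln x - mu) / s)) with (ln x) by (field; lra).
    apply exp_ln, hx. }
  rewrite <- (Hphi a ha), <- (Hphi b hb).
  rewrite <- (RInt_comp (lognormal mu sigma) phi (fun y => s * exp (mu + s * y))).
  - rewrite (RInt_ext _ (fun y => / sqrt PI * gauss y))
      by (intros y _; apply lognormal_change_of_var).
    rewrite (RInt_scal gauss _ _ _ (ex_RInt_gauss _ _)).
    pose proof (RInt_gauss_le ((ln a - mu) / s) ((ln b - mu) / s)).
    apply Rle_trans with (/ sqrt PI * sqrt PI).
    + apply Rmult_le_compat_l; [apply Rlt_le, Rinv_0_lt_compat|]; lra.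
    + right. field. lra.
  - intros; apply lognormal_continuous.
  - intros x _. unfold phi. split.
    + auto_derive; [auto | ring].
    + apply ex_derive_continuous_R. auto_derive. auto.
Qed.

Lemma RInt_lognormal_0_le1 b : 0 < b -> RInt (lognormal mu sigma) 0 b <= 1.
Proof.
  intros hb. change (Rbar_le (RInt (lognormal mu sigma) 0 b) 1).
  apply (filterlim_le (F := at_right 0) (fun a => RInt (lognormal mu sigma) a b) (fun _ => 1)).
  - exists (mkposreal 1 Rlt_0_1). intros a _ ha. apply RInt_lognormal_le1; assumption.
  - apply (filterlim_filter_le_1 _ (filter_le_within _)).
    apply (continuous_RInt_2 (lognormal mu sigma) 0 b), filter_forall. intros a.
    apply (RInt_correct (V:=R_CompleteNormedModule)), ex_RInt_lognormal.
  - apply filterlim_const.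
Qed.

Lemma RInt_lognormal_lt1 t : 0 < t -> RInt (lognormal mu sigma) 0 t < 1.
Proof.
  intros ht.
  assert (Htail : 0 < RInt (lognormal mu sigma) t (t + 1)).
  { apply RInt_gt_0; [lra| |].
    - intros x hx. apply lognormal_gt0. lra.
    - intros; apply lognormal_continuous. }
  pose proof (RInt_lognormal_0_le1 (t + 1) ltac:(lra)) as Hmass.
  rewrite <- (RInt_Chasles (lognormal mu sigma) 0 t (t + 1)) in Hmass by apply ex_RInt_lognormal.
  unfold plus in Hmass; simpl in Hmass. lra.
Qed.

End Lognormal.

(** * Solutions of the equation *)

(* A solution is only right-differentiable at 0; extending it constantly to the left makes it
   continuous on all of R, as the mean value and intermediate value theorems require. *)
Definition extend0 (f : R -> R) (s : R) : R := f (Rmax 0 s).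

Lemma extend0_eq (f : R -> R) (s : R) : 0 <= s -> extend0 f s = f s.
Proof. intros hs. unfold extend0. rewrite Rmax_right by exact hs. reflexivity. Qed.

Definition conv (g I : R -> R) (t : R) : R := RInt (fun s => g (t - s) * I s) 0 t.

Lemma rhsE (beta M : R) (g I : R -> R) (t : R) :
  rhs beta M g I t = beta * (M - I t) * (I t - conv g I t).
Proof. reflexivity. Qed.

Lemma continuity_pt_extend0_0 (f : R -> R) (l : R) :
  filterlim (fun h => (f h - f 0) / h) (at_right 0) (locally l) ->
  continuity_pt (extend0 f) 0.
Proof.
  intros Hf. apply continuity_pt_locally. intros eps. pose proof (cond_pos eps) as heps.
  destruct (at_right_locally_R _ 0 l 1 Hf) as [d [hd Hd]]; [lra|].
  assert (hl : 0 < Rabs l + 1) by (pose proof (Rabs_pos l); lra).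
  pose proof (Rmin_l d (eps / (Rabs l + 1))). pose proof (Rmin_r d (eps / (Rabs l + 1))).
  apply (locally_R_intro 0 (Rmin d (eps / (Rabs l + 1)))).
  { apply Rmin_glb_lt; [lra | apply Rdiv_lt_0_compat; lra]. }
  intros y hy. rewrite Rminus_0_r in hy. rewrite (extend0_eq f 0) by lra.
  destruct (Rle_dec y 0) as [hy0 | hy0].
  { unfold extend0. rewrite Rmax_left, Rminus_diag, Rabs_R0 by lra. apply cond_pos. }
  rewrite extend0_eq by lra. rewrite Rabs_pos_eq in hy by lra.
  specialize (Hd y ltac:(lra)).
  replace (f y - f 0) with (y * ((f y - f 0) / y)) by (field; lra).
  rewrite Rabs_mult, (Rabs_pos_eq y) by lra.
  apply Rle_lt_trans with (y * (Rabs l + 1)).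
  - apply Rmult_le_compat_l; [lra|].
    pose proof (Rabs_triang_inv ((f y - f 0) / y) l). lra.
  - apply Rlt_le_trans with (eps / (Rabs l + 1) * (Rabs l + 1)).
    + apply Rmult_lt_compat_r; lra.
    + right. field. lra.
Qed.

Section Solution.

Variables (beta M : R) (g I : R -> R).
Hypothesis g_cont : forall x, continuous g x.
Hypothesis I_sol : is_C1_solution beta M g I.

Lemma is_derive_extend0 c : 0 < c -> is_derive (extend0 I) c (rhs beta M g I c).
Proof.
  intros hc. destruct I_sol as [HI _].
  apply (is_derive_ext_loc I); [|apply HI, hc].
  apply (locally_R_intro c c); [exact hc|]. intros y hy. apply Rabs_lt_between in hy.
  symmetry. apply extend0_eq. lra.
Qed.

Lemma continuity_pt_extend0 x : continuity_pt (extend0 I) x.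
Proof.
  destruct I_sol as [HI [HI0 _]].
  destruct (Rtotal_order x 0) as [hneg | [-> | hpos]].
  - apply continuity_pt_locally. intros eps.
    apply (locally_R_intro x (- x)); [lra|]. intros y hy. apply Rabs_lt_between in hy.
    unfold extend0. rewrite !Rmax_left by lra. rewrite Rminus_diag, Rabs_R0. apply cond_pos.
  - exact (continuity_pt_extend0_0 I _ HI0).
  - apply (continuity_pt_ext_loc I).
    + apply (locally_R_intro x x); [exact hpos|]. intros y hy. apply Rabs_lt_between in hy.
      symmetry. apply extend0_eq. lra.
    + apply continuity_pt_filterlim, ex_derive_continuous_R. eexists. apply HI, hpos.
Qed.

Lemma rhs_right_continuous t : 0 <= t ->
  filterlim (rhs beta M g I) (at_right t) (locally (rhs beta M g I t)).
Proof.
  destruct I_sol as [_ [_ [Hcont Hcont0]]]. intros ht.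
  destruct (Rle_lt_or_eq_dec 0 t ht) as [hpos | <-]; [|exact Hcont0].
  apply (filterlim_filter_le_1 _ (filter_le_within _)), Hcont, hpos.
Qed.

Lemma ex_RInt_conv_integrand t : 0 <= t -> ex_RInt (fun s => g (t - s) * I s) 0 t.
Proof.
  intros ht. apply (ex_RInt_ext (fun s => g (t - s) * extend0 I s)).
  - intros s hs. rewrite Rmin_left, Rmax_right in hs by lra. rewrite extend0_eq by lra. reflexivity.
  - apply ex_RInt_continuous_R. intros s _.
    apply (continuous_mult (fun s => g (t - s)) (extend0 I)).
    + apply (continuous_comp (fun s => t - s) g); [|apply g_cont].
      apply ex_derive_continuous_R. auto_derive. auto.
    + apply continuity_pt_filterlim, continuity_pt_extend0.
Qed.

Lemma abs_sub_conv_le T : 0 <= T -> exists K, 0 <= K /\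
  forall c m, 0 <= c <= T -> (forall u, 0 <= u <= c -> Rabs (I u) <= m) ->
  Rabs (I c - conv g I c) <= K * m.
Proof.
  intros hT.
  destruct (continuity_pt_bounded g 0 T hT) as [G [hG HG]].
  { intros x _. apply continuity_pt_filterlim, g_cont. }
  exists (1 + T * G). split; [nra|].
  intros c m hc Hm.
  assert (hm : Rabs (I c) <= m) by (apply Hm; lra).
  assert (Hconv : Rabs (conv g I c) <= (c - 0) * (G * m)).
  { apply abs_RInt_le_const; [lra | apply ex_RInt_conv_integrand; lra |].
    intros s hs. rewrite Rabs_mult.
    apply Rmult_le_compat; try apply Rabs_pos; [apply HG; lra | apply Hm; lra]. }
  assert (HGm : c * (G * m) <= T * (G * m)).
  { apply Rmult_le_compat_r; [apply Rmult_le_pos; [|pose proof (Rabs_pos (I c))]; lra | lra]. }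
  pose proof (Rabs_triang (I c) (- conv g I c)) as Htri. rewrite Rabs_Ropp in Htri.
  unfold Rminus. lra.
Qed.

Lemma solution_bounded T : 0 <= T ->
  exists B, 0 <= B /\ forall u, 0 <= u <= T -> Rabs (I u) <= B.
Proof.
  intros hT. destruct (continuity_pt_bounded (extend0 I) 0 T hT) as [B [hB HB]].
  { intros x _. apply continuity_pt_extend0. }
  exists B. split; [exact hB|]. intros u hu. rewrite <- (extend0_eq I u) by lra. apply HB, hu.
Qed.

Lemma abs_rhs_le_mul_dist_M T : 0 <= T -> exists L, 0 <= L /\
  forall c, 0 <= c <= T -> Rabs (rhs beta M g I c) <= L * Rabs (M - I c).
Proof.
  intros hT.
  destruct (solution_bounded T hT) as [B [hB HB]].
  destruct (abs_sub_conv_le T hT) as [K [hK HK]].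
  exists (Rabs beta * (K * B)). split; [apply Rmult_le_pos; [apply Rabs_pos | nra]|].
  intros c hc. rewrite rhsE, !Rabs_mult.
  rewrite (Rmult_comm (Rabs beta * (K * B))), (Rmult_comm (Rabs beta)), Rmult_assoc.
  apply Rmult_le_compat_l; [apply Rabs_pos|].
  apply Rmult_le_compat_l; [apply Rabs_pos|].
  apply HK; [exact hc|]. intros u hu. apply HB. lra.
Qed.

Lemma solution_eq_M : I 0 = M -> forall t, 0 <= t -> I t = M.
Proof.
  intros H0 t ht.
  destruct (abs_rhs_le_mul_dist_M t ht) as [L [hL HL]].
  enough (Ht : M - extend0 I t = 0) by (rewrite extend0_eq in Ht by exact ht; lra).
  apply (eq0_of_abs_derive_le_sup (fun s => M - extend0 I s) (fun c => - rhs beta M g I c) 0 t L);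
    [exact hL | | | | exact ht | | lra].
  - intros x _. apply continuity_pt_minus; [|apply continuity_pt_extend0].
    apply continuity_pt_const. intros ? ?; reflexivity.
  - intros c hc. pose proof (is_derive_extend0 c (proj1 hc)) as Hd.
    auto_derive; [eexists; exact Hd|].
    rewrite (is_derive_unique (fun x : R => extend0 I x) c _ Hd). ring.
  - intros c m hc Hm. rewrite Rabs_Ropp.
    specialize (Hm c ltac:(lra)). rewrite extend0_eq in Hm by lra.
    apply Rle_trans with (L * Rabs (M - I c)); [apply HL; lra | apply Rmult_le_compat_l; lra].
  - rewrite extend0_eq by lra. lra.
Qed.

(* [s |-> M - I (z - s)] vanishes at 0, and its derivative is bounded by a multiple of it. *)
Lemma solution_eq_M_backward z : 0 <= z -> I z = M -> I 0 = M.
Proof.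
  intros hz Hz.
  destruct (abs_rhs_le_mul_dist_M z hz) as [L [hL HL]].
  enough (H0 : M - extend0 I (z - z) = 0)
    by (rewrite Rminus_diag, extend0_eq in H0 by lra; lra).
  apply (eq0_of_abs_derive_le_sup (fun s => M - extend0 I (z - s))
           (fun c => rhs beta M g I (z - c)) 0 z L); [exact hL | | | | exact hz | | lra].
  - intros x _. apply continuity_pt_minus; [apply continuity_pt_const; intros ? ?; reflexivity|].
    apply (continuity_pt_comp (fun s => z - s)); [|apply continuity_pt_extend0].
    apply continuity_pt_minus; [|apply continuity_pt_id].
    apply continuity_pt_const. intros ? ?; reflexivity.
  - intros c hc. pose proof (is_derive_extend0 (z - c) ltac:(lra)) as Hd.
    auto_derive; [eexists; exact Hd|]. replace (z + - c) with (z - c) by ring.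
    rewrite (is_derive_unique (fun x : R => extend0 I x) _ _ Hd). ring.
  - intros c m hc Hm.
    specialize (Hm c ltac:(lra)). rewrite extend0_eq in Hm by lra.
    apply Rle_trans with (L * Rabs (M - I (z - c))); [apply HL; lra | apply Rmult_le_compat_l; lra].
  - rewrite Rminus_0_r, extend0_eq by lra. lra.
Qed.

Lemma solution_lt_M : I 0 < M -> forall t, 0 <= t -> I t < M.
Proof.
  intros H0 t ht. apply Rnot_le_lt. intros HMt.
  destruct (Rle_lt_or_eq_dec M (I t) HMt) as [hlt | heq].
  - assert (ht' : 0 < t) by (destruct (Rle_lt_or_eq_dec 0 t ht) as [|<-]; lra).
    destruct (IVT (fun s => extend0 I s - M) 0 t) as [z [hz Hz]];
      [| exact ht' | rewrite extend0_eq by lra; lra | rewrite extend0_eq by lra; lra |].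
    + intros x. apply continuity_pt_minus; [apply continuity_pt_extend0|].
      apply continuity_pt_const. intros ? ?; reflexivity.
    + rewrite extend0_eq in Hz by lra.
      pose proof (solution_eq_M_backward z (proj1 hz) ltac:(lra)). lra.
  - pose proof (solution_eq_M_backward t ht (eq_sym heq)). lra.
Qed.

Lemma solution_eq0 : I 0 = 0 -> forall t, 0 <= t -> I t = 0.
Proof.
  intros H0 t ht.
  destruct (solution_bounded t ht) as [B [hB HB]].
  destruct (abs_sub_conv_le t ht) as [K [hK HK]].
  rewrite <- (extend0_eq I t) by exact ht.
  apply (eq0_of_abs_derive_le_sup (extend0 I) (rhs beta M g I) 0 t
           (Rabs beta * ((Rabs M + B) * K)));
    [| intros x _; apply continuity_pt_extend0 | intros c hc; apply is_derive_extend0; lra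
    | | exact ht | rewrite extend0_eq; lra | lra].
  { pose proof (Rabs_pos beta). pose proof (Rabs_pos M).
    apply Rmult_le_pos; [|apply Rmult_le_pos]; lra. }
  intros c m hc Hm.
  assert (Hm' : forall u, 0 <= u <= c -> Rabs (I u) <= m).
  { intros u hu. rewrite <- (extend0_eq I u) by lra. apply Hm, hu. }
  rewrite rhsE, !Rabs_mult, !Rmult_assoc.
  apply Rmult_le_compat_l; [apply Rabs_pos|].
  apply Rmult_le_compat; [apply Rabs_pos | apply Rabs_pos | | apply HK; [lra | exact Hm']].
  pose proof (Rabs_triang M (- I c)) as Htri. rewrite Rabs_Ropp in Htri.
  pose proof (HB c ltac:(lra)). unfold Rminus. lra.
Qed.

Lemma solution_le_of_rhs_ge0 s1 s2 : 0 <= s1 <= s2 ->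
  (forall c, s1 < c < s2 -> 0 <= rhs beta M g I c) -> I s1 <= I s2.
Proof.
  intros hs Hc. rewrite <- (extend0_eq I s1), <- (extend0_eq I s2) by lra.
  apply (le_of_derive_ge0 (extend0 I) (rhs beta M g I) s1 s2); [lra | | | exact Hc].
  - intros; apply continuity_pt_extend0.
  - intros c hc. apply is_derive_extend0. lra.
Qed.

Section Positivity.

Hypothesis beta_pos : 0 < beta.
Hypothesis g_ge0 : forall x, 0 <= g x.
Hypothesis RInt_g_lt1 : forall t, 0 < t -> RInt g 0 t < 1.

Lemma conv_le_mul_RInt t : 0 <= t -> (forall s, 0 <= s <= t -> I s <= I t) ->
  conv g I t <= I t * RInt g 0 t.
Proof.
  intros ht Hmax.
  assert (Hrefl : forall s, continuous (fun s => g (t - s)) s).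
  { intros s. apply (continuous_comp (fun s => t - s) g); [|apply g_cont].
    apply ex_derive_continuous_R. auto_derive. auto. }
  assert (Hex : ex_RInt (fun s => g (t - s)) 0 t) by (apply ex_RInt_continuous_R; auto).
  assert (Hscal : RInt (fun s => I t * g (t - s)) 0 t = I t * RInt (fun s => g (t - s)) 0 t)
    by exact (RInt_scal _ _ _ _ Hex).
  rewrite <- (RInt_reflect g t), <- Hscal
    by (apply ex_RInt_continuous_R; intros; apply g_cont).
  apply RInt_le; [exact ht | apply ex_RInt_conv_integrand, ht | |].
  - apply ex_RInt_continuous_R. intros s _. apply (continuous_mult (fun _ => I t)); auto.
    apply continuous_const.
  - intros s hs. rewrite (Rmult_comm (I t)).
    apply Rmult_le_compat_l; [apply g_ge0 | apply Hmax; lra].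
Qed.

Lemma rhs_pos_iff s : 0 <= s -> I s < M -> 0 < rhs beta M g I s <-> conv g I s < I s.
Proof.
  intros hs hIs. rewrite rhsE. split; intros Hpos.
  - apply Rnot_le_lt. intros Hle.
    enough (beta * (M - I s) * (I s - conv g I s) <= 0) by lra.
    apply Rmult_le_0_l; [apply Rmult_le_pos|]; lra.
  - apply Rmult_lt_0_compat; [apply Rmult_lt_0_compat|]; lra.
Qed.

Lemma conv_lt_solution : 0 < I 0 -> I 0 < M -> forall t, 0 <= t -> conv g I t < I t.
Proof.
  intros H0 H0M t ht.
  pose proof (solution_lt_M H0M) as HltM.
  apply (continuation_principle (fun s => conv g I s < I s) 0 t); [exact ht | | | | lra].
  - unfold conv. rewrite RInt_point. exact H0.
  - intros s hs Hbelow.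
    assert (Hmono : forall u, 0 <= u <= s -> I u <= I s).
    { intros u hu. apply solution_le_of_rhs_ge0; [exact hu|].
      intros c hc. apply Rlt_le, rhs_pos_iff; [lra | apply HltM; lra | apply Hbelow; lra]. }
    pose proof (Hmono 0 ltac:(lra)). pose proof (RInt_g_lt1 s (proj1 hs)).
    pose proof (conv_le_mul_RInt s ltac:(lra) Hmono).
    enough (I s * RInt g 0 s < I s * 1) by lra.
    apply Rmult_lt_compat_l; lra.
  - intros s hs Hupto.
    assert (Hs : 0 < rhs beta M g I s)
      by (apply rhs_pos_iff; [lra | apply HltM; lra | apply Hupto; lra]).
    destruct (at_right_locally_R _ s _ _ (rhs_right_continuous s (proj1 hs)) Hs) as [d [hd Hd]].
    exists d. split; [exact hd|]. intros y hy.
    specialize (Hd y hy). apply Rabs_lt_between in Hd.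
    apply rhs_pos_iff; [lra | apply HltM; lra | lra].
Qed.

Lemma solution_gt0 : 0 < I 0 -> I 0 <= M -> forall t, 0 <= t -> 0 < I t.
Proof.
  intros H0 H0M t ht.
  destruct (Rle_lt_or_eq_dec (I 0) M H0M) as [hlt | heq].
  - enough (I 0 <= I t) by lra.
    apply solution_le_of_rhs_ge0; [lra|]. intros c hc.
    apply Rlt_le, rhs_pos_iff; [lra | apply solution_lt_M; lra | apply conv_lt_solution; lra].
  - rewrite (solution_eq_M heq t ht). lra.
Qed.

End Positivity.

End Solution.

Theorem proposition3p5 (M beta mu sigma : R) (I : R -> R)
  (hM : 0 < M) (hbeta : 0 < beta) (hsigma : 0 < sigma)
  (hI0 : 0 <= I 0 <= M)
  (hsol : is_C1_solution beta M (lognormal mu sigma) I) :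
  ((0 < I 0 -> forall t, 0 <= t -> 0 < I t) /\
   (I 0 = 0 -> forall t, 0 <= t -> I t = 0)) /\
  ((I 0 < M -> forall t, 0 <= t -> I t < M) /\
   (I 0 = M -> forall t, 0 <= t -> I t = M)).
Proof.
  assert (g_cont : forall x, continuous (lognormal mu sigma) x)
    by (intros; apply lognormal_continuous, hsigma).
  split; split.
  - intros H0. apply (solution_gt0 beta M _ I g_cont hsol hbeta); [| | exact H0 | apply hI0].
    + intros; apply lognormal_ge0, hsigma.
    + intros; apply RInt_lognormal_lt1; assumption.
  - exact (solution_eq0 beta M _ I g_cont hsol).
  - exact (solution_lt_M beta M _ I g_cont hsol).
  - exact (solution_eq_M beta M _ I g_cont hsol).
Qed.
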